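(* Let $p_F$ be the coupled-model failure function and $q_i^F$ the decoupled-model station failure functions described in the context, both built from the same data $k$, $(c_i)$, $(v_i)$, $(\lambda_{od})$, $(\rho_{od})$. Then for every $t\ge 0$, $$p_F(t)\le\sum_{i\in X}q_i^F(t),$$ i.e. $\mathbb P(V(t)=F)\le\sum_{i\in X}\mathbb P(\bar V_i(t)=F)$.
   Context: Fix $k\ge 1$ stations $X=\{1,\dots,k\}$, capacities $c_1,\dots,c_k\in\mathbb N$, and initial vehicle counts $v_1,\dots,v_k$ with $0\le v_i\le c_i$. For each ordered pair $o\neq d$ in $X$ let $\lambda_{od}:[0,\infty)\to[0,\infty)$ be a continuous demand intensity, and let $\rho_{od}\subset[0,\infty)$ be a locally finite set of rebalancing times; assume the sets $\rho_{od}$ are pairwise disjoint and do not contain $0$, and put $\rho=\bigcup_{o\neq d}\rho_{od}$. Travel times are taken to be zero. Coupled model. Let $\mathbb M_i=\{0,\dots,c_i\}$ and $\mathbb M=\mathbb M_1\times\dots\times\mathbb M_k$. For $o\neq d$ let $T_{od}:\mathbb Z^k\to\mathbb Z^k$ map $\mathbf m=(m_1,\dots,m_k)$ to $\mathbf m'$ with $m'_o=m_o-1$, $m'_d=m_d+1$, $m'_i=m_i$ otherwise; $T_{od}^{-1}$ is its inverse. Write $\mathbb M^{i=j}=\{\mathbf m\in\mathbb M: m_i=j\}$. The functions $p_{\mathbf m}$ ($\mathbf m\in\mathbb M$) and $p_F$ on $[0,\infty)$ are defined as follows, with the convention $p_{\mathbf m}:\equiv 0$ for $\mathbf m\notin\mathbb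 M$: - $p_{\mathbf m}(0)=1$ if $\mathbf m=(v_1,\dots,v_k)$, else $0$; $p_F(0)=0$. - At each $t\in\rho_{od}$: $p_{\mathbf m}(t)=\lim_{t'\to t^-}p_{T_{od}^{-1}(\mathbf m)}(t')$, and $p_F(t)=\lim_{t'\to t^-}\big(p_F(t')+\sum_{\mathbf m\in\mathbb M^{o=0}\cup\mathbb M^{d=c_d}}p_{\mathbf m}(t')\big)$. - On $[0,\infty)\setminus\rho$: $\dot p_{\mathbf m}(t)=\sum_{o\neq d}\lambda_{od}(t)\,p_{T_{od}^{-1}(\mathbf m)}(t)-p_{\mathbf m}(t)\sum_{o\neq d}\lambda_{od}(t)$ and $\dot p_F(t)=\sum_{o\neq d}\lambda_{od}(t)\sum_{\mathbf m\in\mathbb M^{o=0}\cup\mathbb M^{d=c_d}}p_{\mathbf m}(t)$. $p_F(t)$ is interpreted as $\mathbb P(V(t)=F)$, the probability that the system has experienced a failure in $[0,t]$. Decoupled model. For each station $i$ let $\lambda_i^a(t)=\sum_{o\neq i}\lambda_{oi}(t)$, $\lambda_i^d(t)=\sum_{d\neq i}\lambda_{id}(t)$, $\rho_i^a=\bigcup_{o\neq i}\rho_{oi}$ and $\rho_i^d=\bigcup_{d\neq i}\rho_{id}$. The functions $q_i^j$ ($0\le j\le c_i$) and $q_i^F$ on $[0,\infty)$ are defined, with the convention $q_i^{-1}\equiv q_i^{c_i+1}\equiv 0$, by: - $q_i^j(0)=1$ if $j=v_i$, else $0$; $q_i^F(0)=0$. - At $t\in\rho_i^a$: $q_i^j(t)=\lim_{t'\to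 t^-}q_i^{j-1}(t')$ and $q_i^F(t)=\lim_{t'\to t^-}(q_i^F(t')+q_i^{c_i}(t'))$. - At $t\in\rho_i^d$: $q_i^j(t)=\lim_{t'\to t^-}q_i^{j+1}(t')$ and $q_i^F(t)=\lim_{t'\to t^-}(q_i^F(t')+q_i^{0}(t'))$. - Elsewhere: $\dot q_i^j(t)=\lambda_i^a(t)q_i^{j-1}(t)-(\lambda_i^a(t)+\lambda_i^d(t))q_i^j(t)+\lambda_i^d(t)q_i^{j+1}(t)$ and $\dot q_i^F(t)=\lambda_i^a(t)q_i^{c_i}(t)+\lambda_i^d(t)q_i^0(t)$. $q_i^F(t)$ is interpreted as $\mathbb P(\bar V_i(t)=F)$, the probability that station $i$ has experienced a failure in $[0,t]$ in the decoupled model. *)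

From Stdlib Require Import Reals Lra Lia ZArith Arith List.
Import ListNotations.
Open Scope R_scope.

(* Stations are indexed 0 .. k-1 (paper: 1 .. k).
   A state m ∈ Z^k is represented by a list Z of length k; the i-th
   coordinate is [nth i m 0%Z]. *)

Definition sumR {A : Type} (l : list A) (f : A -> R) : R :=
  fold_right (fun x acc => f x + acc) 0 l.

Definition pairs (k : nat) : list (nat * nat) :=
  flat_map (fun o => map (fun d => (o, d))
                          (filter (fun d => negb (Nat.eqb o d)) (seq 0 k)))
           (seq 0 k).

Fixpoint boxes (cs : list nat) : list (list Z) :=
  match cs with
  | nil => [nil]
  | c :: cs' => flat_map (fun j => map (cons (Z.of_nat j)) (boxes cs'))
                         (seq 0 (S c))
  end.

Definition Mlist (k : nat) (c : nat -> nat) : list (list Z) :=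
  boxes (map c (seq 0 k)).

Definition inM (k : nat) (c : nat -> nat) (m : list Z) : Prop :=
  length m = k /\ forall i, (i < k)%nat -> (0 <= nth i m 0%Z <= Z.of_nat (c i))%Z.

Fixpoint upd (l : list Z) (i : nat) (f : Z -> Z) : list Z :=
  match l, i with
  | nil, _ => nil
  | x :: l', O => f x :: l'
  | x :: l', S i' => x :: upd l' i' f
  end.

Definition Tinv (o d : nat) (m : list Z) : list Z :=
  upd (upd m o (fun z => (z + 1)%Z)) d (fun z => (z - 1)%Z).

Definition failM (c : nat -> nat) (o d : nat) (m : list Z) : bool :=
  orb (Z.eqb (nth o m 0%Z) 0%Z) (Z.eqb (nth d m 0%Z) (Z.of_nat (c d))).

Definition left_lim (f : R -> R) (t l : R) : Prop :=
  forall eps, eps > 0 -> exists delta, delta > 0 /\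
    forall t', t - delta < t' < t -> Rabs (f t' - l) < eps.

Definition right_cont (f : R -> R) (t : R) : Prop :=
  forall eps, eps > 0 -> exists delta, delta > 0 /\
    forall t', t < t' < t + delta -> Rabs (f t' - f t) < eps.

Definition cont_nonneg (f : R -> R) : Prop :=
  forall t, 0 <= t -> forall eps, eps > 0 -> exists delta, delta > 0 /\
    forall t', 0 <= t' -> Rabs (t' - t) < delta -> Rabs (f t' - f t) < eps.

Definition valid_data (k : nat) (c v : nat -> nat)
  (lam : nat -> nat -> R -> R) (rho : nat -> nat -> R -> Prop) : Prop :=
  (1 <= k)%nat /\
  (forall i, (i < k)%nat -> (v i <= c i)%nat) /\
  (forall o d, (o < k)%nat -> (d < k)%nat -> o <> d ->
     cont_nonneg (lam o d) /\ (forall t, 0 <= t -> 0 <= lam o d t)) /\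
  (forall o d, (o < k)%nat -> (d < k)%nat -> o <> d ->
     (forall t, rho o d t -> 0 < t) /\
     (forall T, exists l : list R, forall t, rho o d t -> t <= T -> In t l)) /\
  (forall o d o' d' t, (o < k)%nat -> (d < k)%nat -> o <> d ->
     (o' < k)%nat -> (d' < k)%nat -> o' <> d' ->
     rho o d t -> rho o' d' t -> o = o' /\ d = d').

Definition rho_all (k : nat) (rho : nat -> nat -> R -> Prop) (t : R) : Prop :=
  exists o d, (o < k)%nat /\ (d < k)%nat /\ o <> d /\ rho o d t.

Definition init_state (k : nat) (v : nat -> nat) : list Z :=
  map (fun i => Z.of_nat (v i)) (seq 0 k).

Definition coupled_solution (k : nat) (c v : nat -> nat)
  (lam : nat -> nat -> R -> R) (rho : nat -> nat -> R -> Prop)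
  (p : list Z -> R -> R) (pF : R -> R) : Prop :=
  (forall m t, ~ inM k c m -> p m t = 0) /\
  (forall m, inM k c m ->
     p m 0 = if list_eq_dec Z.eq_dec m (init_state k v) then 1 else 0) /\
  pF 0 = 0 /\
  (forall o d t, (o < k)%nat -> (d < k)%nat -> o <> d -> rho o d t ->
     (forall m, inM k c m -> left_lim (p (Tinv o d m)) t (p m t)) /\
     left_lim (fun s => pF s + sumR (filter (failM c o d) (Mlist k c))
                                      (fun m => p m s)) t (pF t)) /\
  (forall t, 0 < t -> ~ rho_all k rho t ->
     (forall m, inM k c m ->
        derivable_pt_lim (p m) t
          (sumR (pairs k) (fun od => lam (fst od) (snd od) t
                                      * p (Tinv (fst od) (snd od) m) t)
           - p m t * sumR (pairs k) (fun od => lam (fst od) (snd od) t))) /\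
     derivable_pt_lim pF t
       (sumR (pairs k) (fun od => lam (fst od) (snd od) t *
          sumR (filter (failM c (fst od) (snd od)) (Mlist k c))
               (fun m => p m t)))) /\
  (forall t, 0 <= t -> (forall m, right_cont (p m) t) /\ right_cont pF t).

Definition others (k i : nat) : list nat :=
  filter (fun o => negb (Nat.eqb o i)) (seq 0 k).

Definition lam_a (k : nat) (lam : nat -> nat -> R -> R) (i : nat) (t : R) : R :=
  sumR (others k i) (fun o => lam o i t).
Definition lam_d (k : nat) (lam : nat -> nat -> R -> R) (i : nat) (t : R) : R :=
  sumR (others k i) (fun d => lam i d t).

Definition rho_a (k : nat) (rho : nat -> nat -> R -> Prop) (i : nat) (t : R) : Prop :=
  exists o, (o < k)%nat /\ o <> i /\ rho o i t.
Definition rho_d (k : nat) (rho : nat -> nat -> R -> Prop) (i : nat) (t : R) : Prop :=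
  exists d, (d < k)%nat /\ d <> i /\ rho i d t.

Definition decoupled_solution (k : nat) (c v : nat -> nat)
  (lam : nat -> nat -> R -> R) (rho : nat -> nat -> R -> Prop)
  (q : nat -> Z -> R -> R) (qF : nat -> R -> R) : Prop :=
  forall i, (i < k)%nat ->
  (* convention q_i^j = 0 for j outside {0..c_i} (in particular j=-1, c_i+1) *)
  (forall j t, (j < 0 \/ j > Z.of_nat (c i))%Z -> q i j t = 0) /\
  (forall j, (0 <= j <= Z.of_nat (c i))%Z ->
     q i j 0 = if Z.eqb j (Z.of_nat (v i)) then 1 else 0) /\
  qF i 0 = 0 /\
  (forall t, rho_a k rho i t ->
     (forall j, (0 <= j <= Z.of_nat (c i))%Z ->
        left_lim (q i (j - 1)%Z) t (q i j t)) /\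
     left_lim (fun s => qF i s + q i (Z.of_nat (c i)) s) t (qF i t)) /\
  (forall t, rho_d k rho i t ->
     (forall j, (0 <= j <= Z.of_nat (c i))%Z ->
        left_lim (q i (j + 1)%Z) t (q i j t)) /\
     left_lim (fun s => qF i s + q i 0%Z s) t (qF i t)) /\
  (forall t, 0 < t -> ~ rho_a k rho i t -> ~ rho_d k rho i t ->
     (forall j, (0 <= j <= Z.of_nat (c i))%Z ->
        derivable_pt_lim (q i j) t
          (lam_a k lam i t * q i (j - 1)%Z t
           - (lam_a k lam i t + lam_d k lam i t) * q i j t
           + lam_d k lam i t * q i (j + 1)%Z t)) /\
     derivable_pt_lim (qF i) t
       (lam_a k lam i t * q i (Z.of_nat (c i)) t + lam_d k lam i t * q i 0%Z t)) /\
  (forall t, 0 <= t -> (forall j, right_cont (q i j) t) /\ right_cont (qF i) t).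

(* Both bounds come from one comparison principle ([nonneg_invariance]): finitely many
   functions on [0, T] that start nonnegative, are right-continuous, keep nonnegativity
   across their (locally finitely many) jumps, and in between satisfy [u_a' >= - B eta]
   whenever [u_a <= 0] and all [u_b >= - eta], stay nonnegative.  It is proved by continuous
   induction, comparing with a linear barrier.

   The principle first gives [p_m >= 0].  Next, the marginal [r_i^j], the sum of [p_m] over
   [m_i = j], obeys the birth-death equation of the decoupled station [i], except that it also
   loses the mass of every transition leaving [M]; applied to [q_i^j - r_i^j] the principle
   gives [r_i^j <= q_i^j].  Finally, a coupled failure through [(o, d)] needs [m_o = 0] or
   [m_d = c_d], so [p_F] grows at rate at most [sum lambda_od (r_o^0 + r_d^{c_d})], which is
   bounded by [sum_i (lambda_i^a q_i^{c_i} + lambda_i^d q_i^0)], the growth rate of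
   [sum_i q_i^F]; the jumps compare in the same way. *)

From Stdlib Require Import Reals ZArith List Lra Lia Classical.
Import ListNotations.
Open Scope R_scope.

Lemma continuous_induction (P : R -> Prop) a b : a <= b -> P a ->
  (forall t, a <= t < b -> P t -> exists d, d > 0 /\ forall s, t < s < t + d -> P s) ->
  (forall t, a < t <= b -> (forall s, a <= s < t -> P s) -> P t) ->
  forall t, a <= t <= b -> P t.
Proof.
  intros Hab Pa Hext Hcl.
  set (E := fun x => a <= x <= b /\ forall s, a <= s <= x -> P s).
  assert (HEa : E a).
  { split; [lra|]. intros s Hs. replace s with a by lra. exact Pa. }
  assert (Hbound : bound E) by (exists b; intros x [Hx _]; lra).
  destruct (completeness E Hbound (ex_intro _ a HEa)) as [m [Hub Hlub]].
  assert (Ham : a <= m) by (apply Hub; exact HEa).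
  assert (Hmb : m <= b) by (apply Hlub; intros x [Hx _]; lra).
  assert (Hbelow : forall s, a <= s < m -> P s).
  { intros s Hs. destruct (classic (exists x, E x /\ s < x)) as [[x [[_ Hx] Hsx]]|Hn].
    - apply Hx. lra.
    - exfalso. assert (Hs_ub : is_upper_bound E s).
      { intros x Ex. destruct (Rle_dec x s) as [|Hxs]; [assumption|].
        exfalso; apply Hn; exists x; split; [assumption|lra]. }
      specialize (Hlub s Hs_ub). lra. }
  assert (Em : E m).
  { assert (Pm : P m).
    { destruct (Req_dec m a) as [->|Hne]; [exact Pa|]. apply Hcl; [lra|exact Hbelow]. }
    split; [lra|]. intros s Hs.
    destruct (Req_dec s m) as [->|]; [exact Pm|]. apply Hbelow. lra. }
  assert (Hmeqb : m = b).
  { destruct (Rle_lt_or_eq_dec m b Hmb) as [Hlt|]; [|assumption]. exfalso.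
    destruct (Hext m (conj Ham Hlt) (proj2 Em m (conj Ham (Rle_refl m)))) as [d [Hd Hs]].
    set (x := Rmin (m + d/2) b).
    assert (Hx1 : x <= m + d/2) by apply Rmin_l.
    assert (Hx2 : x <= b) by apply Rmin_r.
    assert (Hmx : m < x) by (unfold x; apply Rmin_case; lra).
    assert (Ex : E x).
    { split; [lra|]. intros s Hs'. destruct (Rle_dec s m).
      - apply Em; lra.
      - apply Hs. lra. }
    specialize (Hub x Ex). lra. }
  intros t Ht. subst m. apply Em. lra.
Qed.

Lemma common_delta {A} (L : list A) (Q : A -> R -> Prop) :
  (forall a d d', In a L -> 0 < d' <= d -> Q a d -> Q a d') ->
  (forall a, In a L -> exists d, d > 0 /\ Q a d) ->
  exists d, d > 0 /\ forall a, In a L -> Q a d.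
Proof.
  intros Hmon. induction L as [|x L IH]; intros H.
  - exists 1. split; [lra|]. intros a [].
  - destruct (H x (or_introl eq_refl)) as [d1 [Hd1 Q1]].
    destruct IH as [d2 [Hd2 Q2]].
    { intros a b0 d' Ha. apply Hmon. right; assumption. }
    { intros a Ha. apply H. right; assumption. }
    assert (Hm1 : Rmin d1 d2 <= d1) by apply Rmin_l.
    assert (Hm2 : Rmin d1 d2 <= d2) by apply Rmin_r.
    assert (Hm : 0 < Rmin d1 d2) by (apply Rmin_case; lra).
    exists (Rmin d1 d2). split; [lra|].
    intros a [<-|Ha].
    + apply Hmon with d1; [left; reflexivity|lra|assumption].
    + apply Hmon with d2; [right; assumption|lra|auto].
Qed.

Lemma derivable_pt_lim_left_lim f t d : derivable_pt_lim f t d -> left_lim f t (f t).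
Proof.
  intros H eps Heps.
  destruct (H 1 Rlt_0_1) as [del Hdel].
  set (K := Rabs d + 1).
  assert (HK : 0 < K) by (unfold K; pose proof (Rabs_pos d); lra).
  assert (Hm1 : Rmin del (eps / K) <= del) by apply Rmin_l.
  assert (Hm2 : Rmin del (eps / K) <= eps / K) by apply Rmin_r.
  exists (Rmin del (eps / K)). split.
  { apply Rmin_case; [apply cond_pos|apply Rdiv_lt_0_compat; lra]. }
  intros t' [H1 H2].
  set (h := t' - t).
  assert (Hh0 : h <> 0) by (unfold h; lra).
  assert (Hh : Rabs h = t - t') by (unfold h; rewrite Rabs_left by lra; ring).
  specialize (Hdel h Hh0 ltac:(lra)).
  replace (t + h) with t' in Hdel by (unfold h; ring).
  set (z := (f t' - f t) / h) in Hdel.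
  assert (Hz : f t' - f t = z * h) by (unfold z; field; assumption).
  rewrite Hz, Rabs_mult.
  assert (Hz1 : Rabs z <= K).
  { unfold K. replace z with ((z - d) + d) by ring.
    pose proof (Rabs_triang (z - d) d). lra. }
  assert (Hz2 : Rabs z * Rabs h <= K * Rabs h)
    by (apply Rmult_le_compat_r; [apply Rabs_pos|assumption]).
  assert (Hz3 : K * Rabs h < K * (eps / K)) by (apply Rmult_lt_compat_l; lra).
  replace (K * (eps / K)) with eps in Hz3 by (field; lra). lra.
Qed.

Lemma left_lim_ge0 f t l a : left_lim f t l -> a < t ->
  (forall s, a <= s < t -> 0 <= f s) -> 0 <= l.
Proof.
  intros H Hat Hf. destruct (Rle_dec 0 l) as [|Hl]; [assumption|]. exfalso.
  destruct (H (- l)) as [d [Hd Hs]]; [lra|].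
  set (s := Rmax (t - d/2) ((a + t)/2)).
  assert (t - d/2 <= s) by apply Rmax_l.
  assert ((a+t)/2 <= s) by apply Rmax_r.
  assert (s < t) by (unfold s; apply Rmax_case; lra).
  specialize (Hs s ltac:(lra)). specialize (Hf s ltac:(lra)).
  apply Rabs_def2 in Hs. lra.
Qed.

Lemma derivable_pt_lim_pos_before f x d a : derivable_pt_lim f x d -> d > 0 -> a < x ->
  exists s, a <= s < x /\ f s < f x.
Proof.
  intros H Hd Hax. destruct (H d Hd) as [del Hdel].
  set (r := Rmin (del/2) ((x - a)/2)).
  assert (Hr : 0 < r) by (unfold r; apply Rmin_case; pose proof (cond_pos del); lra).
  assert (r <= del/2) by apply Rmin_l.
  assert (r <= (x-a)/2) by apply Rmin_r.
  assert (Hhd : Rabs (- r) < del) by (rewrite Rabs_left by lra; pose proof (cond_pos del); lra).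
  specialize (Hdel (- r) ltac:(lra) Hhd). exists (x - r). split; [lra|].
  apply Rabs_def2 in Hdel. destruct Hdel as [_ Hlow].
  replace (x + - r) with (x - r) in Hlow by ring.
  assert (Hq : 0 < (f (x - r) - f x) / - r) by lra.
  replace ((f (x - r) - f x) / - r) with ((f x - f (x - r)) / r) in Hq by (field; lra).
  apply (Rmult_lt_compat_r r) in Hq; [|lra].
  replace ((f x - f (x - r)) / r * r) with (f x - f (x - r)) in Hq by (field; lra). lra.
Qed.

Lemma left_lim_plus f g t a b :
  left_lim f t a -> left_lim g t b -> left_lim (fun s => f s + g s) t (a + b).
Proof.
  intros Hf Hg eps Heps.
  destruct (Hf (eps/2) ltac:(lra)) as [d1 [Hd1 H1]].
  destruct (Hg (eps/2) ltac:(lra)) as [d2 [Hd2 H2]].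
  assert (Rmin d1 d2 <= d1) by apply Rmin_l. assert (Rmin d1 d2 <= d2) by apply Rmin_r.
  exists (Rmin d1 d2). split; [apply Rmin_case; lra|]. intros s Hs.
  specialize (H1 s ltac:(lra)). specialize (H2 s ltac:(lra)).
  replace (f s + g s - (a + b)) with ((f s - a) + (g s - b)) by ring.
  pose proof (Rabs_triang (f s - a) (g s - b)). lra.
Qed.

Lemma left_lim_opp f t a : left_lim f t a -> left_lim (fun s => - f s) t (- a).
Proof.
  intros Hf eps Heps. destruct (Hf eps Heps) as [d [Hd H]]. exists d. split; auto.
  intros s Hs. replace (- f s - - a) with (- (f s - a)) by ring. rewrite Rabs_Ropp. auto.
Qed.

Lemma left_lim_minus f g t a b :
  left_lim f t a -> left_lim g t b -> left_lim (fun s => f s - g s) t (a - b).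
Proof. intros. apply (left_lim_plus f (fun s => - g s)); auto. apply left_lim_opp; auto. Qed.

Lemma left_lim_const a t : left_lim (fun _ => a) t a.
Proof.
  intros eps Heps. exists 1. split; [lra|]. intros.
  replace (a - a) with 0 by ring. rewrite Rabs_R0; lra.
Qed.

Lemma left_lim_ext f g t a : (forall s, f s = g s) -> left_lim f t a -> left_lim g t a.
Proof.
  intros E H eps He. destruct (H eps He) as [d [Hd H']]. exists d. split; auto.
  intros; rewrite <- E; auto.
Qed.

Lemma right_cont_plus f g t :
  right_cont f t -> right_cont g t -> right_cont (fun s => f s + g s) t.
Proof.
  intros Hf Hg eps Heps.
  destruct (Hf (eps/2) ltac:(lra)) as [d1 [Hd1 H1]].
  destruct (Hg (eps/2) ltac:(lra)) as [d2 [Hd2 H2]].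
  assert (Rmin d1 d2 <= d1) by apply Rmin_l. assert (Rmin d1 d2 <= d2) by apply Rmin_r.
  exists (Rmin d1 d2). split; [apply Rmin_case; lra|]. intros s Hs.
  specialize (H1 s ltac:(lra)). specialize (H2 s ltac:(lra)).
  replace (f s + g s - (f t + g t)) with ((f s - f t) + (g s - g t)) by ring.
  pose proof (Rabs_triang (f s - f t) (g s - g t)). lra.
Qed.

Lemma right_cont_opp f t : right_cont f t -> right_cont (fun s => - f s) t.
Proof.
  intros Hf eps Heps. destruct (Hf eps Heps) as [d [Hd H]]. exists d. split; auto.
  intros s Hs. replace (- f s - - f t) with (- (f s - f t)) by ring. rewrite Rabs_Ropp. auto.
Qed.

Lemma right_cont_minus f g t :
  right_cont f t -> right_cont g t -> right_cont (fun s => f s - g s) t.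
Proof. intros. apply (right_cont_plus f (fun s => - g s)); auto. apply right_cont_opp; auto. Qed.

Lemma right_cont_const a t : right_cont (fun _ => a) t.
Proof.
  intros eps Heps. exists 1. split; [lra|]. intros.
  replace (a - a) with 0 by ring. rewrite Rabs_R0; lra.
Qed.

Lemma cont_nonneg_bounded f T : cont_nonneg f -> 0 <= T ->
  exists B, forall s, 0 <= s <= T -> f s <= B.
Proof.
  intros Hf HT.
  apply (continuous_induction (fun x => exists B, forall s, 0 <= s <= x -> f s <= B) 0 T);
    try lra.
  - exists (f 0). intros s Hs. replace s with 0 by lra. lra.
  - intros x Hx [B HB]. destruct (Hf x ltac:(lra) 1 ltac:(lra)) as [d [Hd Hc]].
    exists d. split; auto. intros s Hs. exists (Rmax B (f x + 1)). intros y Hy.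
    destruct (Rle_dec y x).
    + apply Rle_trans with B; [apply HB; lra| apply Rmax_l].
    + assert (Hyx : Rabs (y - x) < d) by (rewrite Rabs_right; lra).
      specialize (Hc y ltac:(lra) Hyx). apply Rabs_def2 in Hc.
      apply Rle_trans with (f x + 1); [lra| apply Rmax_r].
  - intros x Hx Hbelow. destruct (Hf x ltac:(lra) 1 ltac:(lra)) as [d [Hd Hc]].
    set (y0 := Rmax 0 (x - d/2)).
    assert (0 <= y0) by apply Rmax_l. assert (x - d/2 <= y0) by apply Rmax_r.
    assert (y0 < x) by (unfold y0; apply Rmax_case; lra).
    destruct (Hbelow y0 ltac:(lra)) as [B HB].
    exists (Rmax B (f x + 1)). intros y Hy.
    destruct (Rle_dec y y0).
    + apply Rle_trans with B; [apply HB; lra| apply Rmax_l].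
    + assert (Hyx : Rabs (y - x) < d) by (unfold Rabs; destruct (Rcase_abs (y - x)); lra).
      specialize (Hc y ltac:(lra) Hyx). apply Rabs_def2 in Hc.
      apply Rle_trans with (f x + 1); [lra| apply Rmax_r].
Qed.

Section NonnegInvariance.

Variables (A : Type) (L : list A) (u : A -> R -> R) (S : R -> Prop) (T B : R).

Definition nonneg_at (t : R) : Prop := forall a, In a L -> 0 <= u a t.

Hypothesis B_ge0 : 0 <= B.
Hypothesis u_right_cont : forall a t, In a L -> 0 <= t -> right_cont (u a) t.
Hypothesis S_gap : forall t, 0 <= t -> exists d, d > 0 /\ forall s, t < s < t + d -> ~ S s.
Hypothesis u_jump :
  forall t, 0 < t <= T -> S t -> (forall s, 0 <= s < t -> nonneg_at s) -> nonneg_at t.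
Hypothesis u_deriv : forall t, 0 < t <= T -> ~ S t -> forall a, In a L ->
  exists d, derivable_pt_lim (u a) t d /\
    forall eta, 0 <= eta -> (forall b, In b L -> - eta <= u b t) -> u a t <= 0 -> - B * eta <= d.

Lemma nonneg_at_of_before t :
  0 < t <= T -> (forall s, 0 <= s < t -> nonneg_at s) -> nonneg_at t.
Proof.
  intros Ht Hbefore. destruct (classic (S t)) as [HS|HnS]; [exact (u_jump t Ht HS Hbefore)|].
  intros a Ha. destruct (u_deriv t Ht HnS a Ha) as [d [Hd _]].
  apply (left_lim_ge0 _ t _ 0 (derivable_pt_lim_left_lim _ _ _ Hd)); [lra|].
  intros s Hs. apply Hbefore; [lra|assumption].
Qed.

(* A linear barrier of slope [e (2B + 1)], steeper than the worst decay rate [2 B e] that the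
   derivative bound allows while the barrier stays below [2 e]. *)
Definition barrier (e t0 s : R) : R := e * (1 + (2 * B + 1) * (s - t0)).

Lemma derivable_pt_lim_barrier e t0 x : derivable_pt_lim (barrier e t0) x (e * (2 * B + 1)).
Proof.
  intros eps Heps. exists (mkposreal 1 Rlt_0_1). intros h Hh _. unfold barrier.
  replace ((e * (1 + (2 * B + 1) * (x + h - t0)) - e * (1 + (2 * B + 1) * (x - t0))) / h
           - e * (2 * B + 1)) with 0 by (field; assumption).
  rewrite Rabs_R0. assumption.
Qed.

Lemma barrier_bounds e t0 s : 0 < e -> t0 <= s -> (2 * B + 1) * (s - t0) <= 1 ->
  e <= barrier e t0 s <= 2 * e.
Proof.
  intros He Hs Hslope. unfold barrier.
  assert (0 <= (2 * B + 1) * (s - t0)) by (apply Rmult_le_pos; lra). nra.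
Qed.

Lemma barrier_first_touch t0 e x :
  0 < e -> 0 <= t0 < x -> x <= T -> ~ S x -> (2 * B + 1) * (x - t0) <= 1 ->
  (forall s, t0 <= s < x -> forall a, In a L -> 0 < u a s + barrier e t0 s) ->
  forall a, In a L -> 0 < u a x + barrier e t0 x.
Proof.
  intros He Hx HxT HxS Hslope Hbefore.
  assert (Hx0 : 0 < x <= T) by lra.
  assert (Hbar := barrier_bounds e t0 x He ltac:(lra) Hslope).
  assert (Hge : forall b, In b L -> 0 <= u b x + barrier e t0 x).
  { intros b Hb. destruct (u_deriv x Hx0 HxS b Hb) as [db [Hdb _]].
    pose proof (derivable_pt_lim_plus _ _ _ _ _ Hdb (derivable_pt_lim_barrier e t0 x)) as Hw.
    apply (left_lim_ge0 _ x _ t0 (derivable_pt_lim_left_lim _ _ _ Hw)); [lra|].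
    intros y Hy. left. apply Hbefore; [lra|assumption]. }
  intros a Ha. destruct (Rle_dec (u a x + barrier e t0 x) 0) as [Hle|]; [|lra]. exfalso.
  destruct (u_deriv x Hx0 HxS a Ha) as [da [Hda Hlow]].
  assert (Hda_ge : - B * barrier e t0 x <= da).
  { apply Hlow; [lra| |lra]. intros b Hb. specialize (Hge b Hb). lra. }
  assert (Hrise : da + e * (2 * B + 1) > 0).
  { assert (B * barrier e t0 x <= B * (2 * e)) by (apply Rmult_le_compat_l; lra). nra. }
  pose proof (derivable_pt_lim_plus _ _ _ _ _ Hda (derivable_pt_lim_barrier e t0 x)) as Hw.
  destruct (derivable_pt_lim_pos_before _ _ _ t0 Hw Hrise ltac:(lra)) as [s [Hs Hlt]].
  unfold plus_fct in Hlt. specialize (Hbefore s ltac:(lra) a Ha). lra.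
Qed.

Lemma barrier_positive t0 t1 e :
  0 <= t0 < t1 -> t1 <= T -> (2 * B + 1) * (t1 - t0) <= 1 ->
  (forall s, t0 < s < t1 -> ~ S s) -> nonneg_at t0 -> 0 < e ->
  forall s, t0 <= s < t1 -> forall a, In a L -> 0 < u a s + barrier e t0 s.
Proof.
  intros Ht01 Ht1 Hslope Hgap H0 He s Hs.
  assert (Hslope_le : forall x, t0 <= x <= t1 -> (2 * B + 1) * (x - t0) <= 1).
  { intros x Hx. assert ((2 * B + 1) * (x - t0) <= (2 * B + 1) * (t1 - t0))
      by (apply Rmult_le_compat_l; lra). lra. }
  apply (continuous_induction
           (fun x => forall a, In a L -> 0 < u a x + barrier e t0 x) t0 s); try lra.
  - intros a Ha. specialize (H0 a Ha). unfold barrier.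
    replace (t0 - t0) with 0 by ring. lra.
  - intros x Hx Px.
    destruct (common_delta L
                (fun a d => forall y, x < y < x + d -> 0 < u a y + barrier e t0 y))
      as [d [Hd Hq]].
    { intros a d d' _ Hd' Hq y Hy. apply Hq. lra. }
    { intros a Ha. specialize (Px a Ha).
      set (w := u a x + barrier e t0 x) in Px.
      destruct (u_right_cont a x Ha ltac:(lra) (w/2) ltac:(lra)) as [dl [Hdl Hclose]].
      exists dl. split; [assumption|]. intros y Hy.
      specialize (Hclose y Hy). apply Rabs_def2 in Hclose.
      assert (barrier e t0 x <= barrier e t0 y).
      { unfold barrier. apply Rmult_le_compat_l; [lra|].
        assert ((2 * B + 1) * (x - t0) <= (2 * B + 1) * (y - t0))
          by (apply Rmult_le_compat_l; lra). lra. }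
      unfold w in *. lra. }
    exists d. split; [exact Hd|]. intros y Hy a Ha. apply Hq; assumption.
  - intros x Hx Px. apply (barrier_first_touch t0); try lra.
    + apply Hgap. lra.
    + apply Hslope_le. lra.
    + exact Px.
Qed.

Lemma nonneg_at_extends t0 : 0 <= t0 < T -> nonneg_at t0 ->
  exists d, d > 0 /\ forall s, t0 < s < t0 + d -> nonneg_at s.
Proof.
  intros Ht0 H0.
  destruct (S_gap t0 ltac:(lra)) as [d0 [Hd0 Hgap]].
  set (M := 2 * B + 1).
  assert (HM : 0 < M) by (unfold M; lra).
  set (t1 := Rmin (t0 + d0) (Rmin T (t0 + 1 / M))).
  assert (Ht1a : t1 <= t0 + d0) by apply Rmin_l.
  assert (Ht1b : t1 <= T) by (eapply Rle_trans; [apply Rmin_r|apply Rmin_l]).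
  assert (Ht1c : t1 <= t0 + 1 / M) by (eapply Rle_trans; [apply Rmin_r|apply Rmin_r]).
  assert (HM1 : 0 < 1 / M) by (apply Rdiv_lt_0_compat; lra).
  assert (Ht1 : t0 < t1) by (unfold t1; repeat apply Rmin_case; lra).
  assert (Hslope : M * (t1 - t0) <= 1).
  { apply (Rmult_le_compat_l M) in Ht1c; [|lra].
    replace (M * (t0 + 1 / M)) with (M * t0 + 1) in Ht1c by (field; lra). lra. }
  exists (t1 - t0). split; [lra|]. intros s Hs a Ha.
  destruct (Rle_dec 0 (u a s)) as [|Hneg]; [assumption|]. exfalso.
  (* with [e = - u a s / 4] the barrier is at most [- u a s / 2] at [s] *)
  set (e := - u a s / 4).
  assert (He : 0 < e) by (unfold e; lra).
  pose proof (barrier_positive t0 t1 e ltac:(lra) Ht1b Hslope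
                (fun y Hy => Hgap y ltac:(lra)) H0 He s ltac:(lra) a Ha) as Hpos.
  assert (Hslope_s : M * (s - t0) <= 1).
  { assert (M * (s - t0) <= M * (t1 - t0)) by (apply Rmult_le_compat_l; lra). lra. }
  pose proof (barrier_bounds e t0 s He ltac:(lra) Hslope_s). unfold e in *. lra.
Qed.

Theorem nonneg_invariance : nonneg_at 0 -> forall t, 0 <= t <= T -> nonneg_at t.
Proof.
  intros H0 t Ht.
  apply (continuous_induction nonneg_at 0 T); try lra; auto.
  - intros x Hx Hxnn. apply nonneg_at_extends; [lra|assumption].
  - exact nonneg_at_of_before.
Qed.

End NonnegInvariance.

Lemma sumR_app {A} (l1 l2 : list A) f : sumR (l1 ++ l2) f = sumR l1 f + sumR l2 f.
Proof. induction l1; simpl; [ring| rewrite IHl1; ring]. Qed.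

Lemma sumR_ext {A} (l : list A) f g : (forall x, In x l -> f x = g x) -> sumR l f = sumR l g.
Proof. induction l; simpl; intros H; [reflexivity|]. rewrite H, IHl; auto. Qed.

Lemma sumR_le {A} (l : list A) f g : (forall x, In x l -> f x <= g x) -> sumR l f <= sumR l g.
Proof.
  induction l as [|a l IH]; simpl; intros H; [lra|].
  pose proof (H a (or_introl eq_refl)). pose proof (IH (fun x Hx => H x (or_intror Hx))). lra.
Qed.

Lemma sumR_plus {A} (l : list A) f g : sumR l (fun x => f x + g x) = sumR l f + sumR l g.
Proof. induction l; simpl; [ring| rewrite IHl; ring]. Qed.

Lemma sumR_minus {A} (l : list A) f g : sumR l (fun x => f x - g x) = sumR l f - sumR l g.
Proof. induction l; simpl; [ring| rewrite IHl; ring]. Qed.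

Lemma sumR_mult_l {A} (l : list A) a f : sumR l (fun x => a * f x) = a * sumR l f.
Proof. induction l; simpl; [ring| rewrite IHl; ring]. Qed.

Lemma sumR_mult_r {A} (l : list A) a f : sumR l (fun x => f x * a) = sumR l f * a.
Proof. induction l; simpl; [ring| rewrite IHl; ring]. Qed.

Lemma sumR_zero {A} (l : list A) : sumR l (fun _ => 0) = 0.
Proof. induction l; simpl; [ring| rewrite IHl; ring]. Qed.

Lemma sumR_map {A B} (l : list A) (g : A -> B) f : sumR (map g l) f = sumR l (fun x => f (g x)).
Proof. induction l; simpl; [ring| rewrite IHl; ring]. Qed.

Lemma sumR_flat_map {A B} (l : list A) (g : A -> list B) f :
  sumR (flat_map g l) f = sumR l (fun x => sumR (g x) f).
Proof. induction l; simpl; [ring| rewrite sumR_app, IHl; ring]. Qed.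

Lemma sumR_filter {A} (l : list A) P f :
  sumR (filter P l) f = sumR l (fun x => if P x then f x else 0).
Proof. induction l; simpl; [ring|]. destruct (P a); simpl; rewrite IHl; ring. Qed.

Lemma sumR_swap {A B} (l1 : list A) (l2 : list B) F :
  sumR l1 (fun x => sumR l2 (fun y => F x y)) = sumR l2 (fun y => sumR l1 (fun x => F x y)).
Proof.
  induction l1; simpl; [rewrite sumR_zero; ring|].
  rewrite IHl1, <- sumR_plus. reflexivity.
Qed.

Lemma sumR_eq0 {A} (l : list A) f : (forall x, In x l -> f x = 0) -> sumR l f = 0.
Proof. intros H. rewrite (sumR_ext l f (fun _ => 0)) by auto. apply sumR_zero. Qed.

Lemma sumR_single {A} (l : list A) f a : NoDup l -> In a l ->
  (forall x, In x l -> x <> a -> f x = 0) -> sumR l f = f a.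
Proof.
  induction l as [|y l IH]; intros Hnd Ha H; [destruct Ha|].
  inversion Hnd; subst. simpl. destruct Ha as [<-|Ha].
  - rewrite sumR_eq0; [ring|]. intros x Hx. apply H; [right; auto|]. intros ->. contradiction.
  - rewrite IH, H; auto; [ring|left; auto| |].
    + intros ->; contradiction.
    + intros x Hx Hne. apply H; [right|]; auto.
Qed.

Lemma sumR_ge0 {A} (l : list A) f : (forall x, In x l -> 0 <= f x) -> 0 <= sumR l f.
Proof. intros H. rewrite <- (sumR_zero l). apply sumR_le. auto. Qed.

Lemma sumR_remove_le {A} (dec : forall x y : A, {x = y} + {x <> y}) (l : list A) f a :
  (forall x, 0 <= f x) -> In a l -> f a + sumR (remove dec a l) f <= sumR l f.
Proof.
  intros Hf. induction l as [|y l IH]; intros Ha; [destruct Ha|]. simpl.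
  destruct (dec a y) as [->|Hne].
  - destruct (in_dec dec y l) as [Hi|Hni].
    + specialize (IH Hi). pose proof (Hf y). lra.
    + rewrite notin_remove by auto. lra.
  - simpl. destruct Ha as [->|Ha]; [congruence|]. specialize (IH Ha). lra.
Qed.

Lemma sumR_le_support {A} (dec : forall x y : A, {x = y} + {x <> y}) (K L : list A) f :
  (forall x, 0 <= f x) -> NoDup K -> (forall x, In x K -> f x <> 0 -> In x L) ->
  sumR K f <= sumR L f.
Proof.
  intros Hf. revert L. induction K as [|x K IH]; intros L Hnd Hin; simpl.
  - apply sumR_ge0. auto.
  - inversion Hnd; subst. destruct (Req_dec (f x) 0) as [Hz|Hnz].
    + rewrite Hz, Rplus_0_l. apply IH; auto. intros y Hy. apply Hin. right; auto.
    + pose proof (sumR_remove_le dec L f x Hf (Hin x (or_introl eq_refl) Hnz)).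
      assert (sumR K f <= sumR (remove dec x L) f).
      { apply IH; auto. intros y Hy Hfy. apply in_in_remove.
        - intros ->; contradiction.
        - apply Hin; [right|]; auto. }
      lra.
Qed.

Lemma sumR_indicator k i (f : nat -> R) : (i < k)%nat ->
  sumR (seq 0 k) (fun j => if Nat.eqb j i then f j else 0) = f i.
Proof.
  intros Hi. rewrite (sumR_single _ _ i (seq_NoDup k 0)).
  - rewrite Nat.eqb_refl. reflexivity.
  - apply in_seq; lia.
  - intros x _ Hne. apply Nat.eqb_neq in Hne. rewrite Hne. reflexivity.
Qed.

Lemma derivable_pt_lim_sumR {A} (l : list A) (F : A -> R -> R) dF t :
  (forall x, In x l -> derivable_pt_lim (F x) t (dF x)) ->
  derivable_pt_lim (fun s => sumR l (fun x => F x s)) t (sumR l dF).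
Proof.
  induction l as [|a l IH]; intros H; simpl.
  - apply (derivable_pt_lim_const 0 t).
  - apply (derivable_pt_lim_plus (F a) (fun s => sumR l (fun x => F x s))).
    + apply H; left; auto.
    + apply IH. intros; apply H; right; auto.
Qed.

Lemma left_lim_sumR {A} (l : list A) (F : A -> R -> R) lims t :
  (forall x, In x l -> left_lim (F x) t (lims x)) ->
  left_lim (fun s => sumR l (fun x => F x s)) t (sumR l lims).
Proof.
  induction l as [|a l IH]; intros H; simpl.
  - apply left_lim_const.
  - apply (left_lim_plus (F a) (fun s => sumR l (fun x => F x s))).
    + apply H; left; auto.
    + apply IH. intros; apply H; right; auto.
Qed.

Lemma right_cont_sumR {A} (l : list A) (F : A -> R -> R) t :
  (forall x, In x l -> right_cont (F x) t) ->
  right_cont (fun s => sumR l (fun x => F x s)) t.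
Proof.
  induction l as [|a l IH]; intros H; simpl.
  - apply right_cont_const.
  - apply (right_cont_plus (F a) (fun s => sumR l (fun x => F x s))).
    + apply H; left; auto.
    + apply IH. intros; apply H; right; auto.
Qed.

Lemma sumR_bounded {A} (L : list A) (F : A -> R -> R) T :
  (forall a, In a L -> exists B, forall s, 0 <= s <= T -> F a s <= B) ->
  exists B, forall s, 0 <= s <= T -> sumR L (fun a => F a s) <= B.
Proof.
  induction L as [|a L IH]; intros H.
  - exists 0. intros; simpl; lra.
  - destruct (H a (or_introl eq_refl)) as [B1 H1]. destruct IH as [B2 H2].
    { intros; apply H; right; auto. }
    exists (B1 + B2). intros s Hs. simpl. specialize (H1 s Hs). specialize (H2 s Hs). lra.
Qed.

Lemma list_gap (l : list R) t : exists d, d > 0 /\ forall x, In x l -> ~ (t < x < t + d).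
Proof.
  induction l as [|x l IH].
  - exists 1. split; [lra|]. intros x [].
  - destruct IH as [d [Hd H]].
    destruct (Rlt_dec t x) as [Htx|Htx].
    + assert (Hm1 : Rmin d (x - t) <= d) by apply Rmin_l.
      assert (Hm2 : Rmin d (x - t) <= x - t) by apply Rmin_r.
      exists (Rmin d (x - t)). split; [apply Rmin_case; lra|].
      intros y [<-|Hy]; [lra|]. intros Hc. apply (H y Hy). lra.
    + exists d. split; [lra|]. intros y [<-|Hy]; [lra|]. apply H; auto.
Qed.

Lemma pairs_In k o d : In (o, d) (pairs k) <-> (o < k)%nat /\ (d < k)%nat /\ o <> d.
Proof.
  unfold pairs. rewrite in_flat_map. split.
  - intros [x [Hx Hin]]. apply in_map_iff in Hin. destruct Hin as [y [Heq Hy]].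
    injection Heq as -> ->. apply filter_In in Hy. destruct Hy as [Hy Hne].
    apply in_seq in Hx. apply in_seq in Hy. apply Bool.negb_true_iff, Nat.eqb_neq in Hne. lia.
  - intros [Ho [Hd Hne]]. exists o. split; [apply in_seq; lia|].
    apply in_map_iff. exists d. split; [reflexivity|]. apply filter_In.
    split; [apply in_seq; lia|]. apply Bool.negb_true_iff, Nat.eqb_neq. auto.
Qed.

Lemma sumR_pairs k F : sumR (pairs k) F =
  sumR (seq 0 k) (fun o => sumR (seq 0 k) (fun d => if Nat.eqb o d then 0 else F (o, d))).
Proof.
  unfold pairs. rewrite sumR_flat_map. apply sumR_ext. intros o _.
  rewrite sumR_map, sumR_filter. apply sumR_ext. intros d _. destruct (Nat.eqb o d); reflexivity.
Qed.

Lemma sumR_others k i g :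
  sumR (others k i) g = sumR (seq 0 k) (fun d => if Nat.eqb d i then 0 else g d).
Proof.
  unfold others. rewrite sumR_filter. apply sumR_ext. intros d _. destruct (Nat.eqb d i); reflexivity.
Qed.

Lemma sumR_pairs_fst k i F : (i < k)%nat ->
  sumR (pairs k) (fun od => if Nat.eqb (fst od) i then F od else 0)
  = sumR (others k i) (fun d => F (i, d)).
Proof.
  intros Hi. rewrite sumR_pairs, sumR_others. simpl.
  rewrite (sumR_single _ _ i (seq_NoDup k 0)).
  - apply sumR_ext. intros d _. rewrite Nat.eqb_refl, (Nat.eqb_sym i d). reflexivity.
  - apply in_seq; lia.
  - intros x _ Hne. apply Nat.eqb_neq in Hne. apply sumR_eq0. intros d _. rewrite Hne.
    destruct (Nat.eqb x d); reflexivity.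
Qed.

Lemma sumR_pairs_snd k i F : (i < k)%nat ->
  sumR (pairs k) (fun od => if Nat.eqb (snd od) i then F od else 0)
  = sumR (others k i) (fun o => F (o, i)).
Proof.
  intros Hi. rewrite sumR_pairs, sumR_others. simpl. apply sumR_ext. intros o _.
  rewrite (sumR_single _ _ i (seq_NoDup k 0)).
  - rewrite Nat.eqb_refl, Nat.eqb_sym. destruct (Nat.eqb o i); reflexivity.
  - apply in_seq; lia.
  - intros x _ Hne. apply Nat.eqb_neq in Hne. rewrite Hne. destruct (Nat.eqb o x); reflexivity.
Qed.

Definition total_rate (k : nat) (lam : nat -> nat -> R -> R) (t : R) : R :=
  sumR (pairs k) (fun od => lam (fst od) (snd od) t).

Lemma lam_d_pairs k lam i t : (i < k)%nat ->
  lam_d k lam i t = sumR (pairs k) (fun od => if Nat.eqb (fst od) i then lam (fst od) (snd od) t else 0).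
Proof. intros Hi. symmetry. exact (sumR_pairs_fst k i (fun od => lam (fst od) (snd od) t) Hi). Qed.

Lemma lam_a_pairs k lam i t : (i < k)%nat ->
  lam_a k lam i t = sumR (pairs k) (fun od => if Nat.eqb (snd od) i then lam (fst od) (snd od) t else 0).
Proof. intros Hi. symmetry. exact (sumR_pairs_snd k i (fun od => lam (fst od) (snd od) t) Hi). Qed.

Lemma sumR_pairs_split k lam (g h : nat -> R) t :
  sumR (pairs k) (fun od => lam (fst od) (snd od) t * (g (fst od) + h (snd od))) =
  sumR (seq 0 k) (fun i => lam_d k lam i t * g i + lam_a k lam i t * h i).
Proof.
  set (l od := lam (fst od) (snd od) t).
  rewrite (sumR_ext (pairs k) _ (fun od => sumR (seq 0 k) (fun i =>
      (if Nat.eqb (fst od) i then l od else 0) * g i +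
      (if Nat.eqb (snd od) i then l od else 0) * h i))).
  - rewrite sumR_swap. apply sumR_ext. intros i Hi. apply in_seq in Hi.
    rewrite sumR_plus, !sumR_mult_r, lam_d_pairs, lam_a_pairs by lia. reflexivity.
  - intros [o d] Hod. apply pairs_In in Hod. simpl. rewrite sumR_plus.
    rewrite (sumR_ext (seq 0 k) (fun i => (if Nat.eqb o i then l (o, d) else 0) * g i)
               (fun i => if Nat.eqb i o then l (o, d) * g i else 0))
      by (intros; rewrite Nat.eqb_sym; destruct Nat.eqb; ring).
    rewrite (sumR_ext (seq 0 k) (fun i => (if Nat.eqb d i then l (o, d) else 0) * h i)
               (fun i => if Nat.eqb i d then l (o, d) * h i else 0))
      by (intros; rewrite Nat.eqb_sym; destruct Nat.eqb; ring).
    rewrite (sumR_indicator k o (fun i => l (o, d) * g i)),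
      (sumR_indicator k d (fun i => l (o, d) * h i)) by lia.
    unfold l. simpl. ring.
Qed.

Lemma boxes_In cs l : In l (boxes cs) <->
  length l = length cs /\
  forall i, (i < length cs)%nat -> (0 <= nth i l 0 <= Z.of_nat (nth i cs 0%nat))%Z.
Proof.
  revert l. induction cs as [|c cs IH]; intros l; cbn [boxes length].
  - split.
    + intros [<-|[]]. split; [reflexivity|]. intros; lia.
    + intros [Hl _]. destruct l; [left; reflexivity| discriminate].
  - rewrite in_flat_map. split.
    + intros [j [Hj Hin]]. apply in_map_iff in Hin. destruct Hin as [l' [<- Hl']].
      apply IH in Hl'. destruct Hl' as [Hlen Hb]. apply in_seq in Hj. simpl. split; [lia|].
      intros [|i] Hi; simpl; [lia|]. apply Hb. lia.
    + intros [Hlen Hb]. destruct l as [|x l']; [discriminate|]. simpl in Hlen.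
      pose proof (Hb 0%nat ltac:(lia)) as H0. simpl in H0.
      exists (Z.to_nat x). split; [apply in_seq; lia|]. apply in_map_iff. exists l'.
      split; [f_equal; lia|]. apply IH. split; [lia|]. intros i Hi. apply (Hb (S i)). lia.
Qed.

Lemma NoDup_boxes cs : NoDup (boxes cs).
Proof.
  induction cs as [|c cs IH]; cbn [boxes].
  - constructor; [intros []|constructor].
  - generalize (seq_NoDup (S c) 0). generalize (seq 0 (S c)) as js.
    induction js as [|j js IHj]; intros Hnd; simpl; [constructor|].
    inversion Hnd; subst. apply NoDup_app.
    + apply NoDup_map_NoDup_ForallPairs; auto. intros a b _ _ H. injection H; auto.
    + auto.
    + intros a Ha Hb. apply in_map_iff in Ha. destruct Ha as [l1 [<- _]].
      apply in_flat_map in Hb. destruct Hb as [j' [Hj' Hb]]. apply in_map_iff in Hb.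
      destruct Hb as [l2 [Heq _]]. injection Heq as Hjj _. apply Nat2Z.inj in Hjj.
      subst. contradiction.
Qed.

Lemma In_Mlist k c m : In m (Mlist k c) <-> inM k c m.
Proof.
  assert (E : forall i, (i < k)%nat -> nth i (map c (seq 0 k)) 0%nat = c i).
  { intros i Hi. erewrite nth_indep with (d' := c 0%nat) by (rewrite length_map, length_seq; lia).
    rewrite map_nth, seq_nth by lia. reflexivity. }
  unfold Mlist, inM. rewrite boxes_In, length_map, length_seq.
  split; intros [Hl H]; split; auto; intros i Hi; specialize (H i Hi); rewrite E in *; auto.
Qed.

Lemma NoDup_Mlist k c : NoDup (Mlist k c).
Proof. apply NoDup_boxes. Qed.

Lemma nth_init_state k v i : (i < k)%nat -> nth i (init_state k v) 0%Z = Z.of_nat (v i).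
Proof.
  intros Hi. unfold init_state.
  rewrite (nth_indep _ 0%Z (Z.of_nat (v 0%nat))) by (rewrite length_map, length_seq; lia).
  rewrite (map_nth (fun i0 => Z.of_nat (v i0)) (seq 0 k) 0%nat i), seq_nth by lia. reflexivity.
Qed.

Lemma length_upd l i f : length (upd l i f) = length l.
Proof. revert i; induction l; intros [|i]; simpl; auto. Qed.

Lemma nth_upd l i f j : (i < length l)%nat ->
  nth j (upd l i f) 0%Z = if Nat.eqb j i then f (nth i l 0%Z) else nth j l 0%Z.
Proof.
  revert i j; induction l as [|x l IH]; intros i j Hi; simpl in Hi; [lia|].
  destruct i as [|i]; destruct j as [|j]; simpl; try reflexivity. apply IH; lia.
Qed.

Lemma upd_inj l1 l2 i f : (forall x y, f x = f y -> x = y) -> upd l1 i f = upd l2 i f -> l1 = l2.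
Proof.
  intros Hf. revert l2 i; induction l1 as [|x l1 IH]; intros [|y l2] [|i] H; simpl in H;
    try discriminate; auto.
  - injection H as H1 H2. f_equal; auto.
  - injection H as H1 H2. f_equal; eauto.
Qed.

Lemma Tinv_inj o d m1 m2 : Tinv o d m1 = Tinv o d m2 -> m1 = m2.
Proof.
  unfold Tinv. intros H. apply upd_inj in H; [|intros; lia]. apply upd_inj in H; [|intros; lia].
  exact H.
Qed.

Definition Tinv_shift (i o d : nat) : Z :=
  ((if Nat.eqb i o then 1 else 0) - (if Nat.eqb i d then 1 else 0))%Z.

Lemma nth_Tinv o d m i : (o < length m)%nat -> (d < length m)%nat ->
  nth i (Tinv o d m) 0%Z = (nth i m 0%Z + Tinv_shift i o d)%Z.
Proof.
  intros Ho Hd. unfold Tinv, Tinv_shift. rewrite nth_upd by (rewrite length_upd; auto).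
  rewrite !nth_upd by auto.
  destruct (Nat.eqb_spec i d); destruct (Nat.eqb_spec i o); destruct (Nat.eqb_spec d o);
    subst; lia.
Qed.

Lemma sumR_pairs_Tinv_shift k lam i (r : Z -> R) j t : (i < k)%nat ->
  sumR (pairs k) (fun od => lam (fst od) (snd od) t * (r (j + Tinv_shift i (fst od) (snd od))%Z - r j))
  = lam_a k lam i t * (r (j - 1)%Z - r j) + lam_d k lam i t * (r (j + 1)%Z - r j).
Proof.
  intros Hi. rewrite lam_a_pairs, lam_d_pairs, <- !sumR_mult_r, <- sumR_plus by exact Hi.
  apply sumR_ext. intros [o d] Hod. apply pairs_In in Hod. unfold Tinv_shift. simpl.
  destruct (Nat.eqb_spec i o); destruct (Nat.eqb_spec i d);
    destruct (Nat.eqb_spec o i); destruct (Nat.eqb_spec d i); subst; try lia;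
    [replace (j + (1 - 0))%Z with (j + 1)%Z by ring
    |replace (j + (0 - 1))%Z with (j - 1)%Z by ring
    |replace (j + (0 - 0))%Z with j by ring]; ring.
Qed.

Definition levels (n : nat) : list Z := map Z.of_nat (seq 0 (S n)).

Lemma In_levels n j : In j (levels n) <-> (0 <= j <= Z.of_nat n)%Z.
Proof.
  unfold levels. rewrite in_map_iff. split.
  - intros [x [<- Hx]]. apply in_seq in Hx. lia.
  - intros Hj. exists (Z.to_nat j). split; [lia|]. apply in_seq. lia.
Qed.

Definition marginal (k : nat) (c : nat -> nat) (p : list Z -> R -> R) (i : nat) (j : Z) (t : R) : R :=
  sumR (Mlist k c) (fun m => if Z.eqb (nth i m 0%Z) j then p m t else 0).

Lemma marginal_out k c p i j t : (i < k)%nat -> (j < 0 \/ j > Z.of_nat (c i))%Z ->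
  marginal k c p i j t = 0.
Proof.
  intros Hi Hj. apply sumR_eq0. intros m Hm. apply In_Mlist in Hm. destruct Hm as [_ Hb].
  specialize (Hb i Hi). destruct (Z.eqb_spec (nth i m 0%Z) j); [lia|reflexivity].
Qed.

Section Model.

Variables (k : nat) (c v : nat -> nat) (lam : nat -> nat -> R -> R)
  (rho : nat -> nat -> R -> Prop) (p : list Z -> R -> R) (pF : R -> R)
  (q : nat -> Z -> R -> R) (qF : nat -> R -> R).

Hypothesis data : valid_data k c v lam rho.
Hypothesis coupled : coupled_solution k c v lam rho p pF.
Hypothesis decoupled : decoupled_solution k c v lam rho q qF.

Lemma lam_ge0 od s : In od (pairs k) -> 0 <= s -> 0 <= lam (fst od) (snd od) s.
Proof.
  destruct data as (_ & _ & Hlam & _). intros Hod Hs. destruct od as [o d].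
  apply pairs_In in Hod. destruct Hod as (Ho & Hd & Hne). exact (proj2 (Hlam o d Ho Hd Hne) s Hs).
Qed.

Lemma total_rate_ge0 s : 0 <= s -> 0 <= total_rate k lam s.
Proof. intros Hs. apply sumR_ge0. intros od Hod. apply lam_ge0; assumption. Qed.

Lemma station_rates i s : (i < k)%nat -> 0 <= s ->
  0 <= lam_a k lam i s /\ 0 <= lam_d k lam i s /\
  lam_a k lam i s + lam_d k lam i s <= total_rate k lam s.
Proof.
  intros Hi Hs. rewrite lam_a_pairs, lam_d_pairs by exact Hi. split; [|split].
  - apply sumR_ge0. intros od Hod. destruct Nat.eqb; [apply lam_ge0; auto|lra].
  - apply sumR_ge0. intros od Hod. destruct Nat.eqb; [apply lam_ge0; auto|lra].
  - rewrite <- sumR_plus. apply sumR_le. intros [o d] Hod.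
    pose proof (lam_ge0 (o, d) s Hod Hs). apply pairs_In in Hod. simpl in *.
    destruct (Nat.eqb_spec d i); destruct (Nat.eqb_spec o i); lia || lra.
Qed.

Lemma total_rate_bounded T : 0 <= T ->
  exists B, 0 <= B /\ forall s, 0 <= s <= T -> total_rate k lam s <= B.
Proof.
  destruct data as (_ & _ & Hlam & _). intros HT.
  destruct (sumR_bounded (pairs k) (fun od s => lam (fst od) (snd od) s) T) as [B HB].
  { intros [o d] Hod. apply pairs_In in Hod. destruct Hod as (Ho & Hd & Hne).
    apply cont_nonneg_bounded; [exact (proj1 (Hlam o d Ho Hd Hne))|exact HT]. }
  exists (Rmax B 0). split; [apply Rmax_r|]. intros s Hs.
  apply Rle_trans with B; [apply HB; exact Hs|apply Rmax_l].
Qed.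

Lemma rho_gap t : 0 <= t -> exists d, d > 0 /\ forall s, t < s < t + d -> ~ rho_all k rho s.
Proof.
  destruct data as (_ & _ & _ & Hrho & _). intros Ht.
  destruct (common_delta (pairs k)
              (fun od d => forall s, t < s < t + d -> ~ rho (fst od) (snd od) s)) as [d [Hd Hq]].
  - intros a d0 d' _ Hd' H s Hs. apply H. lra.
  - intros [o d] Hod. apply pairs_In in Hod. destruct Hod as (Ho & Hd & Hne).
    destruct (proj2 (Hrho o d Ho Hd Hne) (t + 1)) as [l Hl].
    destruct (list_gap l t) as [d0 [Hd0 Hg]]. exists (Rmin d0 1). split; [apply Rmin_case; lra|].
    intros s Hs Hr. assert (Rmin d0 1 <= d0) by apply Rmin_l. assert (Rmin d0 1 <= 1) by apply Rmin_r.
    apply (Hg s); [apply Hl; [exact Hr|lra]|lra].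
  - exists d. split; [exact Hd|]. intros s Hs (o & d' & Ho & Hd' & Hne & Hr).
    apply (Hq (o, d') (proj2 (pairs_In k o d') (conj Ho (conj Hd' Hne))) s Hs). exact Hr.
Qed.

Lemma rho_all_pos t : rho_all k rho t -> 0 < t.
Proof.
  destruct data as (_ & _ & _ & Hrho & _). intros (o & d & Ho & Hd & Hne & Hr).
  exact (proj1 (Hrho o d Ho Hd Hne) t Hr).
Qed.

Lemma not_rho_station i t : (i < k)%nat -> ~ rho_all k rho t ->
  ~ rho_a k rho i t /\ ~ rho_d k rho i t.
Proof.
  intros Hi Hn. split.
  - intros (o & Ho & Hne & Hr). apply Hn. exists o, i. auto.
  - intros (d & Hd & Hne & Hr). apply Hn. exists i, d. auto.
Qed.

Lemma rho_other_station i o d t : (i < k)%nat -> (o < k)%nat -> (d < k)%nat -> o <> d ->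
  rho o d t -> o <> i -> d <> i -> ~ rho_a k rho i t /\ ~ rho_d k rho i t.
Proof.
  destruct data as (_ & _ & _ & _ & Hdisj). intros Hi Ho Hd Hne Hr Hoi Hdi. split.
  - intros (o' & Ho' & Hne' & Hr'). destruct (Hdisj o d o' i t Ho Hd Hne Ho' Hi Hne' Hr Hr').
    congruence.
  - intros (d' & Hd' & Hne' & Hr').
    destruct (Hdisj o d i d' t Ho Hd Hne Hi Hd' (not_eq_sym Hne') Hr Hr'). congruence.
Qed.

Lemma p_nonneg m s : 0 <= s -> 0 <= p m s.
Proof.
  destruct coupled as (p_out & p_init & _ & p_jump & p_deriv & p_rc).
  intros Hs. destruct (classic (inM k c m)) as [HM|HM]; [|rewrite p_out; auto; lra].
  destruct (total_rate_bounded s Hs) as [B [HB HLB]].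
  apply In_Mlist in HM. revert m HM.
  apply (nonneg_invariance _ (Mlist k c) p (rho_all k rho) s B HB); [| exact rho_gap | | | | lra].
  - intros m t _ Ht. exact (proj1 (p_rc t Ht) m).
  - intros t Ht (o & d & Ho & Hd & Hne & Hr) Hbefore m Hm.
    apply (left_lim_ge0 _ t _ 0 (proj1 (p_jump o d t Ho Hd Hne Hr) m (proj1 (In_Mlist k c m) Hm)));
      [lra|].
    intros s' Hs'. destruct (classic (inM k c (Tinv o d m))) as [HT|HT].
    + apply Hbefore; [exact Hs'|apply In_Mlist; exact HT].
    + rewrite p_out by exact HT. lra.
  - intros t Ht Hnr m Hm. destruct (p_deriv t ltac:(lra) Hnr) as [Hdp _].
    eexists. split; [apply Hdp; apply In_Mlist; exact Hm|].
    intros eta Heta Hall Hneg.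
    assert (Hin : - eta * total_rate k lam t <=
      sumR (pairs k) (fun od => lam (fst od) (snd od) t * p (Tinv (fst od) (snd od) m) t)).
    { unfold total_rate. rewrite <- sumR_mult_l. apply sumR_le. intros od Hod.
      replace (- eta * lam (fst od) (snd od) t) with (lam (fst od) (snd od) t * - eta) by ring.
      apply Rmult_le_compat_l; [apply lam_ge0; auto; lra|].
      destruct (classic (inM k c (Tinv (fst od) (snd od) m))) as [HT|HT].
      - apply Hall, In_Mlist; exact HT.
      - rewrite p_out by exact HT. lra. }
    assert (total_rate k lam t <= B) by (apply HLB; lra).
    assert (0 <= total_rate k lam t) by (apply total_rate_ge0; lra).
    assert (- p m t * total_rate k lam t >= 0) by (apply Rle_ge, Rmult_le_pos; lra).
    fold (total_rate k lam t). nra.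
  - intros m Hm. rewrite p_init by (apply In_Mlist; exact Hm). destruct list_eq_dec; lra.
Qed.


Lemma marginal_Tinv_le i o d j s : (o < k)%nat -> (d < k)%nat -> 0 <= s ->
  marginal k c (fun m => p (Tinv o d m)) i j s <= marginal k c p i (j + Tinv_shift i o d) s.
Proof.
  destruct coupled as (p_out & _). intros Ho Hd Hs. unfold marginal.
  set (h := fun x => if Z.eqb (nth i x 0%Z) (j + Tinv_shift i o d)%Z then p x s else 0).
  rewrite (sumR_ext _ _ (fun m => h (Tinv o d m))).
  - rewrite <- sumR_map. apply (sumR_le_support (list_eq_dec Z.eq_dec)).
    + intros x. unfold h. destruct Z.eqb; [apply p_nonneg; exact Hs|lra].
    + apply NoDup_map_NoDup_ForallPairs; [|apply NoDup_Mlist]. intros a b _ _. apply Tinv_inj.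
    + intros x _ Hx. unfold h in Hx. destruct Z.eqb; [|lra].
      apply In_Mlist. destruct (classic (inM k c x)) as [|HM]; [assumption|].
      rewrite p_out in Hx by exact HM. lra.
  - intros m Hm. apply In_Mlist in Hm. destruct Hm as [Hl _]. unfold h.
    rewrite nth_Tinv by lia.
    destruct (Z.eqb_spec (nth i m 0%Z) j);
      destruct (Z.eqb_spec (nth i m 0%Z + Tinv_shift i o d)%Z (j + Tinv_shift i o d)%Z);
      reflexivity || lia.
Qed.

Lemma marginal_left_lim_jump i o d j t : (o < k)%nat -> (d < k)%nat -> o <> d -> rho o d t ->
  left_lim (marginal k c (fun m => p (Tinv o d m)) i j) t (marginal k c p i j t).
Proof.
  destruct coupled as (_ & _ & _ & p_jump & _). intros Ho Hd Hne Hr. unfold marginal.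
  apply (left_lim_sumR (Mlist k c)
           (fun m s => if Z.eqb (nth i m 0%Z) j then p (Tinv o d m) s else 0)).
  intros m Hm. destruct (Z.eqb (nth i m 0%Z) j).
  - exact (proj1 (p_jump o d t Ho Hd Hne Hr) m (proj1 (In_Mlist k c m) Hm)).
  - apply left_lim_const.
Qed.

Lemma marginal_right_cont i j t : 0 <= t -> right_cont (marginal k c p i j) t.
Proof.
  destruct coupled as (_ & _ & _ & _ & _ & p_rc). intros Ht. unfold marginal.
  apply (right_cont_sumR (Mlist k c) (fun m s => if Z.eqb (nth i m 0%Z) j then p m s else 0)).
  intros m _. destruct Z.eqb; [exact (proj1 (p_rc t Ht) m)|apply right_cont_const].
Qed.

Lemma marginal_init i j : (i < k)%nat -> (0 <= j <= Z.of_nat (c i))%Z ->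
  marginal k c p i j 0 = if Z.eqb j (Z.of_nat (v i)) then 1 else 0.
Proof.
  destruct data as (_ & Hvc & _). destruct coupled as (_ & p_init & _). intros Hi Hj.
  assert (Hinit : inM k c (init_state k v)).
  { split; [unfold init_state; rewrite length_map, length_seq; reflexivity|].
    intros i' Hi'. rewrite nth_init_state by exact Hi'. specialize (Hvc i' Hi'). lia. }
  unfold marginal.
  rewrite (sumR_single _ _ (init_state k v) (NoDup_Mlist k c) (proj2 (In_Mlist k c _) Hinit)).
  - rewrite p_init by exact Hinit. destruct list_eq_dec as [_|]; [|congruence].
    rewrite nth_init_state, Z.eqb_sym by exact Hi. destruct Z.eqb; lra.
  - intros x Hx Hne. rewrite p_init by (apply In_Mlist; exact Hx).
    destruct list_eq_dec; [congruence|]. destruct Z.eqb; reflexivity.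
Qed.

Lemma marginal_deriv_le i j t : (i < k)%nat -> 0 < t -> ~ rho_all k rho t ->
  exists D, derivable_pt_lim (marginal k c p i j) t D /\
    D <= lam_a k lam i t * (marginal k c p i (j - 1) t - marginal k c p i j t)
         + lam_d k lam i t * (marginal k c p i (j + 1) t - marginal k c p i j t).
Proof.
  destruct coupled as (_ & _ & _ & _ & p_deriv & _). intros Hi Ht Hnr.
  set (r := fun j' => marginal k c p i j' t).
  set (flow := fun od m => lam (fst od) (snd od) t * (p (Tinv (fst od) (snd od) m) t - p m t)).
  exists (sumR (Mlist k c) (fun m => if Z.eqb (nth i m 0%Z) j
                                      then sumR (pairs k) (fun od => flow od m) else 0)).
  split.
  - unfold marginal. apply (derivable_pt_lim_sumR (Mlist k c)
      (fun m s => if Z.eqb (nth i m 0%Z) j then p m s else 0)).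
    intros m Hm. destruct Z.eqb; [|apply (derivable_pt_lim_const 0 t)].
    replace (sumR (pairs k) (fun od => flow od m)) with
      (sumR (pairs k) (fun od => lam (fst od) (snd od) t * p (Tinv (fst od) (snd od) m) t)
       - p m t * total_rate k lam t).
    + apply (proj1 (p_deriv t Ht Hnr) m). apply In_Mlist. exact Hm.
    + unfold flow, total_rate. rewrite <- sumR_mult_l, <- sumR_minus.
      apply sumR_ext. intros. ring.
  - change (marginal k c p i (j - 1) t) with (r (j - 1)%Z).
    change (marginal k c p i (j + 1) t) with (r (j + 1)%Z).
    change (marginal k c p i j t) with (r j).
    rewrite <- (sumR_pairs_Tinv_shift k lam i r j t Hi).
    rewrite (sumR_ext (Mlist k c) _ (fun m => sumR (pairs k) (fun od =>
               if Z.eqb (nth i m 0%Z) j then flow od m else 0)))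
      by (intros m _; destruct Z.eqb; [reflexivity|symmetry; apply sumR_zero]).
    rewrite sumR_swap. apply sumR_le. intros od Hod.
    destruct od as [o d]. pose proof (proj1 (pairs_In k o d) Hod) as (Ho & Hd & _).
    unfold flow, r, marginal. simpl.
    rewrite (sumR_ext (Mlist k c) _ (fun m => lam o d t *
               ((if Z.eqb (nth i m 0%Z) j then p (Tinv o d m) t else 0)
                - (if Z.eqb (nth i m 0%Z) j then p m t else 0))))
      by (intros m _; destruct Z.eqb; ring).
    rewrite sumR_mult_l, sumR_minus.
    apply Rmult_le_compat_l; [apply (lam_ge0 (o, d)); [exact Hod|lra]|].
    pose proof (marginal_Tinv_le i o d j t Ho Hd ltac:(lra)) as Hle. unfold marginal in Hle.
    lra.
Qed.

Lemma marginal_le_decoupled_jump i t : (i < k)%nat -> rho_all k rho t ->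
  (forall j s, 0 <= s < t -> marginal k c p i j s <= q i j s) ->
  forall j, (0 <= j <= Z.of_nat (c i))%Z -> marginal k c p i j t <= q i j t.
Proof.
  intros Hi Hr Hbefore j Hj.
  destruct (decoupled i Hi) as (_ & _ & _ & q_arr & q_dep & q_deriv & _).
  pose proof (rho_all_pos t Hr) as Ht.
  destruct Hr as (o & d & Ho & Hd & Hne & Hr).
  assert (Hshift : forall j', left_lim (q i j') t (q i j t) ->
            j' = (j + Tinv_shift i o d)%Z -> marginal k c p i j t <= q i j t).
  { intros j' Hq ->.
    pose proof (left_lim_minus _ _ _ _ _ Hq (marginal_left_lim_jump i o d j t Ho Hd Hne Hr)) as Hgap.
    enough (0 <= q i j t - marginal k c p i j t) by lra.
    apply (left_lim_ge0 _ t _ 0 Hgap); [lra|]. intros s Hs.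
    pose proof (marginal_Tinv_le i o d j s Ho Hd ltac:(lra)).
    pose proof (Hbefore (j + Tinv_shift i o d)%Z s Hs). lra. }
  destruct (Nat.eq_dec d i) as [->|Hdi]; [|destruct (Nat.eq_dec o i) as [->|Hoi]].
  - apply (Hshift (j - 1)%Z); [apply (proj1 (q_arr t (ex_intro _ o (conj Ho (conj Hne Hr)))) j Hj)|].
    unfold Tinv_shift. rewrite Nat.eqb_refl. destruct (Nat.eqb_spec i o); [congruence|ring].
  - apply (Hshift (j + 1)%Z);
      [apply (proj1 (q_dep t (ex_intro _ d (conj Hd (conj (not_eq_sym Hne) Hr)))) j Hj)|].
    unfold Tinv_shift. rewrite Nat.eqb_refl. destruct (Nat.eqb_spec i d); [congruence|ring].
  - destruct (rho_other_station i o d t Hi Ho Hd Hne Hr Hoi Hdi) as [Hna Hnd].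
    apply (Hshift j); [exact (derivable_pt_lim_left_lim _ _ _ (proj1 (q_deriv t Ht Hna Hnd) j Hj))|].
    unfold Tinv_shift. destruct (Nat.eqb_spec i o); [congruence|].
    destruct (Nat.eqb_spec i d); [congruence|ring].
Qed.

Lemma marginal_le_decoupled_deriv i j t : (i < k)%nat -> 0 < t -> ~ rho_all k rho t ->
  (0 <= j <= Z.of_nat (c i))%Z ->
  exists D, derivable_pt_lim (fun s => q i j s - marginal k c p i j s) t D /\
    forall eta, 0 <= eta -> (forall j', - eta <= q i j' t - marginal k c p i j' t) ->
      q i j t - marginal k c p i j t <= 0 -> - total_rate k lam t * eta <= D.
Proof.
  intros Hi Ht Hnr Hj.
  destruct (decoupled i Hi) as (_ & _ & _ & _ & _ & q_deriv & _).
  destruct (not_rho_station i t Hi Hnr) as [Hna Hnd].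
  destruct (marginal_deriv_le i j t Hi Ht Hnr) as [D [HD HDle]].
  eexists. split; [exact (derivable_pt_lim_minus _ _ _ _ _ (proj1 (q_deriv t Ht Hna Hnd) j Hj) HD)|].
  intros eta Heta Hall Hneg.
  destruct (station_rates i t Hi ltac:(lra)) as (Ha0 & Hd0 & Had).
  set (la := lam_a k lam i t) in *. set (ld := lam_d k lam i t) in *.
  set (g := fun j' => q i j' t - marginal k c p i j' t).
  assert (Hlow : forall j', - eta <= g j') by exact Hall.
  assert (la * (g (j - 1)%Z + eta) >= 0) by (apply Rle_ge, Rmult_le_pos; [lra|]; pose proof (Hlow (j - 1)%Z); lra).
  assert (ld * (g (j + 1)%Z + eta) >= 0) by (apply Rle_ge, Rmult_le_pos; [lra|]; pose proof (Hlow (j + 1)%Z); lra).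
  assert (0 <= (la + ld) * - g j) by (apply Rmult_le_pos; unfold g; lra).
  assert ((la + ld) * eta <= total_rate k lam t * eta) by (apply Rmult_le_compat_r; lra).
  unfold g in *. nra.
Qed.

Lemma marginal_le_decoupled i j s : (i < k)%nat -> 0 <= s -> marginal k c p i j s <= q i j s.
Proof.
  intros Hi Hs.
  destruct (decoupled i Hi) as (q_out & q_init & _ & _ & _ & _ & q_rc).
  set (gap := fun j' s' => q i j' s' - marginal k c p i j' s').
  assert (Hgap_out : forall j' s', ~ (0 <= j' <= Z.of_nat (c i))%Z -> gap j' s' = 0).
  { intros j' s' Hj'. unfold gap. rewrite q_out, marginal_out by (auto; lia). ring. }
  assert (Hgap_all : forall s' (P : R -> Prop), P 0 ->
            (forall j', In j' (levels (c i)) -> P (gap j' s')) -> forall j', P (gap j' s')).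
  { intros s' P P0 Hlev j'. destruct (classic (0 <= j' <= Z.of_nat (c i))%Z) as [Hj'|Hj'].
    - apply Hlev, In_levels, Hj'.
    - rewrite Hgap_out by exact Hj'. exact P0. }
  destruct (total_rate_bounded s Hs) as [B [HB HLB]].
  enough (Hnn : nonneg_at _ (levels (c i)) gap s).
  { apply (Hgap_all s (fun x => 0 <= x)) with (j' := j) in Hnn; [unfold gap in Hnn; lra|lra]. }
  apply (nonneg_invariance _ (levels (c i)) gap (rho_all k rho) s B HB);
    [| exact rho_gap | | | | lra].
  - intros j' t _ Ht. apply right_cont_minus; [exact (proj1 (q_rc t Ht) j')|].
    apply marginal_right_cont. exact Ht.
  - intros t Ht Hr Hbefore j' Hj'. apply In_levels in Hj'. unfold gap.
    enough (marginal k c p i j' t <= q i j' t) by lra.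
    apply (marginal_le_decoupled_jump i t Hi Hr); [|exact Hj'].
    intros j'' s' Hs'. apply (Hgap_all s' (fun x => 0 <= x)) with (j' := j'') in Hbefore;
      [unfold gap in Hbefore; lra|lra|exact Hs'].
  - intros t Ht Hnr j' Hj'. apply In_levels in Hj'.
    destruct (marginal_le_decoupled_deriv i j' t Hi ltac:(lra) Hnr Hj') as [D [HD Hlow]].
    exists D. split; [exact HD|]. intros eta Heta Hlev Hneg.
    assert (total_rate k lam t * eta <= B * eta) by (apply Rmult_le_compat_r; [|apply HLB]; lra).
    enough (- total_rate k lam t * eta <= D) by lra.
    apply Hlow; [exact Heta| |exact Hneg].
    apply (Hgap_all t (fun x => - eta <= x)); [lra|exact Hlev].
  - intros j' Hj'. apply In_levels in Hj'. unfold gap.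
    rewrite q_init, marginal_init by auto. lra.
Qed.

Lemma failure_mass_le o d s : 0 <= s ->
  sumR (filter (failM c o d) (Mlist k c)) (fun m => p m s)
  <= marginal k c p o 0 s + marginal k c p d (Z.of_nat (c d)) s.
Proof.
  intros Hs. rewrite sumR_filter. unfold marginal. rewrite <- sumR_plus. apply sumR_le.
  intros m _. unfold failM. pose proof (p_nonneg m s Hs).
  destruct (Z.eqb (nth o m 0%Z) 0); destruct (Z.eqb (nth d m 0%Z) (Z.of_nat (c d))); simpl; lra.
Qed.

Lemma failure_gap_deriv t : 0 < t -> ~ rho_all k rho t ->
  exists D, derivable_pt_lim (fun s => sumR (seq 0 k) (fun i => qF i s) - pF s) t D /\ 0 <= D.
Proof.
  destruct coupled as (_ & _ & _ & _ & p_deriv & _). intros Ht Hnr.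
  set (qrate := fun i => lam_a k lam i t * q i (Z.of_nat (c i)) t + lam_d k lam i t * q i 0%Z t).
  assert (Hq : forall i, In i (seq 0 k) -> derivable_pt_lim (qF i) t (qrate i)).
  { intros i Hi. apply in_seq in Hi.
    destruct (not_rho_station i t ltac:(lia) Hnr) as [Hna Hnd].
    destruct (decoupled i ltac:(lia)) as (_ & _ & _ & _ & _ & q_deriv & _).
    exact (proj2 (q_deriv t Ht Hna Hnd)). }
  eexists. split.
  { apply derivable_pt_lim_minus; [|exact (proj2 (p_deriv t Ht Hnr))].
    exact (derivable_pt_lim_sumR (seq 0 k) (fun i s => qF i s) _ t Hq). }
  apply Rle_trans with (sumR (seq 0 k) qrate - sumR (pairs k) (fun od => lam (fst od) (snd od) t *
      (marginal k c p (fst od) 0 t + marginal k c p (snd od) (Z.of_nat (c (snd od))) t))).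
  - rewrite (sumR_pairs_split k lam (fun i => marginal k c p i 0 t)
               (fun i => marginal k c p i (Z.of_nat (c i)) t) t), <- sumR_minus. apply sumR_ge0. intros i Hi. apply in_seq in Hi.
    destruct (station_rates i t ltac:(lia) ltac:(lra)) as (Ha0 & Hd0 & _).
    pose proof (marginal_le_decoupled i 0 t ltac:(lia) ltac:(lra)).
    pose proof (marginal_le_decoupled i (Z.of_nat (c i)) t ltac:(lia) ltac:(lra)).
    unfold qrate.
    assert (0 <= lam_a k lam i t * (q i (Z.of_nat (c i)) t - marginal k c p i (Z.of_nat (c i)) t))
      by (apply Rmult_le_pos; lra).
    assert (0 <= lam_d k lam i t * (q i 0%Z t - marginal k c p i 0 t))
      by (apply Rmult_le_pos; lra).
    lra.
  - apply Rplus_le_compat_l, Ropp_le_contravar, sumR_le. intros od Hod.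
    apply Rmult_le_compat_l; [apply lam_ge0; [exact Hod|lra]|]. apply failure_mass_le. lra.
Qed.

Lemma failure_gap_jump t : rho_all k rho t ->
  (forall s, 0 <= s < t -> 0 <= sumR (seq 0 k) (fun i => qF i s) - pF s) ->
  0 <= sumR (seq 0 k) (fun i => qF i t) - pF t.
Proof.
  destruct coupled as (_ & _ & _ & p_jump & _). intros Hr Hbefore.
  pose proof (rho_all_pos t Hr) as Ht.
  destruct Hr as (o & d & Ho & Hd & Hne & Hr).
  set (before := fun i s => qF i s + (if Nat.eqb i o then q o 0%Z s else 0)
                            + (if Nat.eqb i d then q d (Z.of_nat (c d)) s else 0)).
  assert (Hq : forall i, In i (seq 0 k) -> left_lim (before i) t (qF i t)).
  { intros i Hi. apply in_seq in Hi. unfold before.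
    destruct (decoupled i ltac:(lia)) as (_ & _ & _ & q_arr & q_dep & q_deriv & _).
    destruct (Nat.eqb_spec i o) as [->|Hio]; [|destruct (Nat.eqb_spec i d) as [->|Hid]].
    - destruct (Nat.eqb_spec o d); [congruence|].
      apply (left_lim_ext (fun s => qF o s + q o 0%Z s)); [intros; ring|].
      exact (proj2 (q_dep t (ex_intro _ d (conj Hd (conj (not_eq_sym Hne) Hr))))).
    - apply (left_lim_ext (fun s => qF d s + q d (Z.of_nat (c d)) s)); [intros; ring|].
      exact (proj2 (q_arr t (ex_intro _ o (conj Ho (conj Hne Hr))))).
    - destruct (rho_other_station i o d t ltac:(lia) Ho Hd Hne Hr (not_eq_sym Hio) (not_eq_sym Hid))
        as [Hna Hnd].
      destruct (q_deriv t Ht Hna Hnd) as [_ HqF].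
      apply (left_lim_ext (qF i)); [intros; ring|]. exact (derivable_pt_lim_left_lim _ _ _ HqF). }
  pose proof (left_lim_minus _ _ _ _ _ (left_lim_sumR (seq 0 k) before (fun i => qF i t) t Hq)
                (proj2 (p_jump o d t Ho Hd Hne Hr))) as Hgap.
  apply (left_lim_ge0 _ t _ 0 Hgap); [lra|]. intros s Hs. unfold before.
  rewrite !sumR_plus, (sumR_indicator k o (fun _ => q o 0%Z s)),
    (sumR_indicator k d (fun _ => q d (Z.of_nat (c d)) s)) by assumption.
  pose proof (Hbefore s Hs). pose proof (failure_mass_le o d s ltac:(lra)).
  pose proof (marginal_le_decoupled o 0 s Ho ltac:(lra)).
  pose proof (marginal_le_decoupled d (Z.of_nat (c d)) s Hd ltac:(lra)).
  lra.
Qed.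

Lemma failure_gap_right_cont t : 0 <= t ->
  right_cont (fun s => sumR (seq 0 k) (fun i => qF i s) - pF s) t.
Proof.
  destruct coupled as (_ & _ & _ & _ & _ & p_rc). intros Ht.
  apply right_cont_minus; [|exact (proj2 (p_rc t Ht))].
  apply (right_cont_sumR (seq 0 k) (fun i s => qF i s)). intros i Hi. apply in_seq in Hi.
  destruct (decoupled i ltac:(lia)) as (_ & _ & _ & _ & _ & _ & q_rc).
  exact (proj2 (q_rc t Ht)).
Qed.

Lemma failure_gap_init : sumR (seq 0 k) (fun i => qF i 0) - pF 0 = 0.
Proof.
  destruct coupled as (_ & _ & pF_init & _). rewrite pF_init, sumR_eq0; [ring|].
  intros i Hi. apply in_seq in Hi. destruct (decoupled i ltac:(lia)) as (_ & _ & HqF0 & _).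
  exact HqF0.
Qed.

End Model.

Theorem corollary1 (k : nat) (c v : nat -> nat)
  (lam : nat -> nat -> R -> R) (rho : nat -> nat -> R -> Prop)
  (p : list Z -> R -> R) (pF : R -> R)
  (q : nat -> Z -> R -> R) (qF : nat -> R -> R) :
  valid_data k c v lam rho ->
  coupled_solution k c v lam rho p pF ->
  decoupled_solution k c v lam rho q qF ->
  forall t, 0 <= t -> pF t <= sumR (seq 0 k) (fun i => qF i t).
Proof.
  intros Hdata Hp Hq t Ht.
  set (gap := fun (_ : unit) s => sumR (seq 0 k) (fun i => qF i s) - pF s).
  enough (Hnn : nonneg_at unit [tt] gap t)
    by (specialize (Hnn tt (or_introl eq_refl)); unfold gap in Hnn; lra).
  (* [gap] is nondecreasing between jumps, so the derivative bound holds with [B = 0] *)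
  apply (nonneg_invariance unit [tt] gap (rho_all k rho) t 0 (Rle_refl 0)); [| | | | |lra].
  - intros x s _ Hs. eapply failure_gap_right_cont; eassumption.
  - eapply rho_gap; eassumption.
  - intros s _ Hr Hbefore x _. eapply failure_gap_jump; try eassumption.
    intros s' Hs'. exact (Hbefore s' Hs' tt (or_introl eq_refl)).
  - intros s Hs Hnr x _.
    destruct (failure_gap_deriv k c v lam rho p pF q qF Hdata Hp Hq s ltac:(lra) Hnr) as [D [HD HD0]].
    exists D. split; [exact HD|]. intros. lra.
  - intros x _. unfold gap. erewrite failure_gap_init by eassumption. lra.
Qed.
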